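(* Let $F$ be a finitary set functor with $F\emptyset\ne\emptyset$, with a presentation $\varepsilon\colon H_\Sigma\to F$ and chosen $p'\in\Sigma_0$, $p=\varepsilon_\emptyset(p')$. For every coalgebra $\alpha\colon X\to FX$, the unique coalgebra homomorphism $h\colon(X,\alpha)\to(\nu F,\tau)$ is the join in $(\nu F)^X$ (ordered pointwise by cutting) of the $\omega$-chain $(m\cdot h_n)_{n\in\mathbb N}$ of approximate homomorphisms: $h=\bigsqcup_n m\cdot h_n$.
   Context: $F$ finitary = preserves filtered colimits. $(\mu F,\varphi)$: initial algebra, the colimit of $F^n0$ ($F^00=\emptyset$, $F^{n+1}0=F(F^n0)$) with injections $i_n\colon F^n0\to\mu F$; $(\nu F,\tau)$: terminal coalgebra. $m\colon\mu F\to\nu F$: the unique coalgebra homomorphism $(\mu F,\varphi^{-1})\to(\nu F,\tau)$ (injective). Approximate homomorphisms $h_n\colon X\to\mu F$: $h_0$ is the constant map with value $i_1(p)$ (the least element of $\mu F$), $h_{n+1}=\varphi\cdot Fh_n\cdot\alpha$. Order by cutting on $\nu F$: presentation = finitary signature $\Sigma$, $H_\Sigma Y=\coprod_n\Sigma_n\times Y^n$, natural $\varepsilon\colon H_\Sigma\to F$ with surjective components. $\nu H_\Sigma$ = all $\Sigma$-trees (ordered rooted trees labelled in $\Sigma$, node labelled in $\Sigma_n$ has $n$ children) with $\tau'$ = inverse tree tupling, $\mu H_\Sigma$ = finite ones. $\partial'_ns$: delete nodes of height $>n$, relabel nodes of height $n$ by $p'$. $h^\sharp\colon\mu H_\Sigma\to\mu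 F$: the unique $\Sigma$-algebra homomorphism into $(\mu F,\varphi\varepsilon_{\mu F})$; $\sim$ its kernel; $s\sim^*s'$ iff $\partial'_ns\sim\partial'_ns'$ for all $n$. $\hat k\colon\nu H_\Sigma\to\nu F$: the unique $F$-coalgebra homomorphism $(\nu H_\Sigma,\varepsilon_{\nu H_\Sigma}\tau')\to(\nu F,\tau)$, surjective with kernel $\sim^*$. $x\le y$ in $\nu F$ iff $x=y$ or $x=\hat k(s)$, $y=\hat k(s')$ with $s\sim^*\partial'_ns'$ for some $n$. *)

From mathcomp Require Import all_boot.
Set Implicit Arguments.
Unset Strict Implicit.
Unset Printing Implicit Defensive.

Definition is_functor (F : Type -> Type)
    (fmap : forall A B : Type, (A -> B) -> F A -> F B) : Prop :=
  (forall (A : Type) (x : F A), fmap A A (fun a => a) x = x) /\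
  (forall (A B C : Type) (f : A -> B) (g : B -> C) (x : F A),
      fmap A C (fun a => g (f a)) x = fmap B C g (fmap A B f x)).

(* Finitary set functor: every element of F X lies in the image of F i for
   some finite subset i of X (equivalently for set functors: preservation of
   filtered colimits). A finite subset is given as the image of
   a map 'I_n -> X. *)
Definition finitary (F : Type -> Type)
    (fmap : forall A B : Type, (A -> B) -> F A -> F B) : Prop :=
  forall (X : Type) (x : F X),
    exists (n : nat) (i : 'I_n -> X) (y : F 'I_n), fmap _ _ i y = x.

Definition is_initial_alg (F : Type -> Type)
    (fmap : forall A B : Type, (A -> B) -> F A -> F B)
    (M : Type) (phi : F M -> M) : Prop :=
  forall (A : Type) (a : F A -> A),
    exists h : M -> A,
      (forall t, h (phi t) = a (fmap _ _ h t)) /\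
      (forall h' : M -> A, (forall t, h' (phi t) = a (fmap _ _ h' t)) ->
          forall x, h' x = h x).

Definition is_terminal_coalg (F : Type -> Type)
    (fmap : forall A B : Type, (A -> B) -> F A -> F B)
    (N : Type) (tau : N -> F N) : Prop :=
  forall (A : Type) (a : A -> F A),
    exists h : A -> N,
      (forall x, tau (h x) = fmap _ _ h (a x)) /\
      (forall h' : A -> N, (forall x, tau (h' x) = fmap _ _ h' (a x)) ->
          forall x, h' x = h x).

Definition HSig (Sig : nat -> Type) (Y : Type) : Type :=
  {n : nat & (Sig n * n.-tuple Y)%type}.

Definition HSig_map (Sig : nat -> Type) (A B : Type) (f : A -> B)
    (u : HSig Sig A) : HSig Sig B :=
  let: existT n (s, t) := u in existT _ n (s, map_tuple f t).

Definition HSig_const (Sig : nat -> Type) (Y : Type) (p' : Sig 0) : HSig Sig Y :=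
  existT (fun n => (Sig n * n.-tuple Y)%type) 0 (p', [tuple]).

Definition is_natural (Sig : nat -> Type) (F : Type -> Type)
    (fmap : forall A B : Type, (A -> B) -> F A -> F B)
    (eps : forall Y : Type, HSig Sig Y -> F Y) : Prop :=
  forall (A B : Type) (f : A -> B) (u : HSig Sig A),
    eps B (HSig_map f u) = fmap _ _ f (eps A u).

Definition empty_map (A : Type) (e : Empty_set) : A := match e with end.

(* h_0 = const i_1(p) where i_1 = phi . F(i_0), i_0 : 0 -> muF;
   h_{n+1} = phi . F h_n . alpha *)
Fixpoint approx_hom (F : Type -> Type)
    (fmap : forall A B : Type, (A -> B) -> F A -> F B)
    (muF : Type) (phi : F muF -> muF) (p : F Empty_set)
    (X : Type) (alpha : X -> F X) (n : nat) (x : X) : muF :=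
  match n with
  | 0 => phi (fmap _ _ (@empty_map muF) p)
  | k.+1 => phi (fmap _ _ (approx_hom fmap phi p alpha k) (alpha x))
  end.

(* partial'_n : nuH_Sigma -> muH_Sigma (delete nodes of height > n, relabel
   nodes of height n by p') *)
Fixpoint cut (Sig : nat -> Type) (p' : Sig 0)
    (muH : Type) (phi' : HSig Sig muH -> muH)
    (nuH : Type) (tau' : nuH -> HSig Sig nuH) (n : nat) (s : nuH) : muH :=
  match n with
  | 0 => phi' (HSig_const muH p')
  | k.+1 => phi' (HSig_map (cut p' phi' tau' k) (tau' s))
  end.

Definition sim_star (Sig : nat -> Type) (p' : Sig 0)
    (muH : Type) (phi' : HSig Sig muH -> muH)
    (nuH : Type) (tau' : nuH -> HSig Sig nuH)
    (muF : Type) (hsharp : muH -> muF) (s s' : nuH) : Prop :=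
  forall n, hsharp (cut p' phi' tau' n s) = hsharp (cut p' phi' tau' n s').

(* order by cutting on nuF; m' : muH -> nuH views finite trees as trees *)
Definition cut_le (Sig : nat -> Type) (p' : Sig 0)
    (muH : Type) (phi' : HSig Sig muH -> muH)
    (nuH : Type) (tau' : nuH -> HSig Sig nuH)
    (muF : Type) (hsharp : muH -> muF) (m' : muH -> nuH)
    (nuF : Type) (khat : nuH -> nuF) (x y : nuF) : Prop :=
  x = y \/
  exists (s s' : nuH) (n : nat),
    [/\ x = khat s, y = khat s' &
        sim_star p' phi' tau' hsharp s (m' (cut p' phi' tau' n s'))].

Definition is_pointwise_join (X A : Type) (le : A -> A -> Prop)
    (c : nat -> X -> A) (j : X -> A) : Prop :=
  (forall n x, le (c n x) (j x)) /\
  (forall g : X -> A, (forall n x, le (c n x) (g x)) -> forall x, le (j x) (g x)).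

From mathcomp Require Import all_boot.
From Stdlib Require Import FunctionalExtensionality ClassicalEpsilon.

(* Write d_n : nuF -> muF for the approximate homomorphisms of the terminal
   coalgebra (nuF, tau) itself and trunc_n := m . d_n : nuF -> nuF.  Then
   (1) h_n = d_n . h, since approximate homomorphisms are natural in the coalgebra;
   (2) trunc_j . trunc_k = trunc_(min j k), because m is a homomorphism;
   (3) the maps d_n jointly separate the points of nuF.  This is where
       finitarity is used: F preserves the intersection of the decreasing chain of
       kernels of the d_n, so that intersection is a coalgebra congruence on nuF,
       which is trivial since terminal coalgebras are simple;
   (4) via the presentation, x <= y in the order by cutting iff x = y or
       x = trunc_k y for some k (using surjectivity of khat and (3)).
   The theorem then follows from a purely combinatorial fact about any family of
   truncations satisfying (2) and (3): every point is the least upper bound of its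
   truncations in the order "x = y or x is a truncation of y". *)

Set Implicit Arguments.
Unset Strict Implicit.
Unset Printing Implicit Defensive.

Lemma factor_through_kernel (I T Q : Type) (q0 : Q) (f : I -> T) (g : I -> Q) :
  (forall i j, f i = f j -> g i = g j) -> exists w : T -> Q, forall i, w (f i) = g i.
Proof.
move=> kerfg.
exists (fun t => epsilon (inhabits q0) (fun q => exists i, f i = t /\ g i = q)) => i.
have [j [fji <-]] := epsilon_spec (inhabits q0) (fun q => exists j, f j = f i /\ g j = q)
  (ex_intro _ (g i) (ex_intro _ i (conj erefl erefl))).
exact: kerfg.
Qed.

Lemma finite_kernels_stabilize (I : finType) (T : Type) (f : nat -> I -> T) :
  (forall n N i j, n <= N -> f N i = f N j -> f n i = f n j) ->
  exists n0, forall i j, f n0 i = f n0 j -> forall n, f n i = f n j.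
Proof.
move=> mono.
have stable_on (s : seq (I * I)) : exists n0, forall i j,
    (i, j) \in s -> f n0 i = f n0 j -> forall n, f n i = f n j.
  elim: s => [|[i j] s [n1 IH]]; first by exists 0.
  case: (classic (exists N, f N i <> f N j)) => [[N neq]|none].
    exists (maxn N n1) => i' j'; rewrite in_cons => /orP[/eqP[-> ->] E|ij_s E].
      by case: neq; apply: mono E; apply: leq_maxl.
    by apply: IH ij_s _; apply: mono E; apply: leq_maxr.
  exists n1 => i' j'; rewrite in_cons => /orP[/eqP[-> ->] _ n|ij_s]; last exact: IH.
  by apply: NNPP => neq; apply: none; exists n.
have [n0 Hn0] := stable_on (enum {: I * I}).
by exists n0 => i j; apply: Hn0; rewrite mem_enum.
Qed.

(* Abstract truncations: trunc_n is to be read as "cut at height n". *)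
Section Truncation.

Variables (N : Type) (trunc : nat -> N -> N).
Hypothesis trunc_trunc : forall j k x, trunc j (trunc k x) = trunc (minn j k) x.
Hypothesis trunc_sep : forall x y, (forall n, trunc n x = trunc n y) -> x = y.

Definition below_trunc (x y : N) : Prop := x = y \/ exists k, x = trunc k y.

Lemma trunc_agree_below n n' x y :
  n <= n' -> trunc n' x = trunc n' y -> trunc n x = trunc n y.
Proof. by move=> nn' E; rewrite -(minn_idPl nn') -!trunc_trunc E. Qed.

Lemma trunc_chain n x : below_trunc (trunc n x) (trunc n.+1 x).
Proof. by right; exists n; rewrite trunc_trunc (minn_idPl (leqnSn n)). Qed.

Lemma trunc_below n x : below_trunc (trunc n x) x.
Proof. by right; exists n. Qed.

(* A point bounded by all its truncations is a truncation of the bound: if x and z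
   differ at level n0, all higher truncations of x are strictly lower truncations
   of z, hence x stabilises from level n0 on and equals its own n0-truncation. *)
Lemma trunc_least x z : (forall n, below_trunc (trunc n x) z) -> below_trunc x z.
Proof.
move=> bound.
case: (classic (forall n, trunc n x = trunc n z)) => [agree|]; first by left; apply: trunc_sep.
move=> /not_all_ex_not [n0 differ]; right.
have lower n' : n0 <= n' -> exists2 k, k < n' & trunc n' x = trunc k z.
  move=> n0n'; case: (bound n') => [xz|[k xk]].
    by case: differ; rewrite -xz trunc_trunc (minn_idPl n0n').
  case: (ltnP k n') => [kn'|n'k]; first by exists k.
  case: differ; apply: (trunc_agree_below n0n').
  have -> : trunc n' x = trunc n' (trunc n' x) by rewrite trunc_trunc minnn.
  by rewrite xk trunc_trunc (minn_idPl n'k).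
have stable i : trunc (n0 + i) x = trunc n0 x.
  elim: i => [|i IH]; first by rewrite addn0.
  have [k] := lower (n0 + i).+1 (leqW (leq_addr i n0)); rewrite ltnS => kle xk.
  have down : trunc (n0 + i) x = trunc (n0 + i) (trunc (n0 + i).+1 x).
    by rewrite trunc_trunc (minn_idPl (leqnSn _)).
  by rewrite addnS -IH down xk trunc_trunc (minn_idPr kle).
have x_finite : x = trunc n0 x.
  apply: trunc_sep => j; rewrite trunc_trunc.
  case: (leqP j n0) => [//|n0j].
  by rewrite -(subnKC (ltnW n0j)) stable.
have [k _ xk] := lower n0 (leqnn n0).
by exists k; rewrite x_finite xk.
Qed.

End Truncation.

Section Signature.

Variable Sig : nat -> Type.

Lemma HSig_map_comp (A B C : Type) (f : A -> B) (g : B -> C) (u : HSig Sig A) :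
  HSig_map (fun a => g (f a)) u = HSig_map g (HSig_map f u).
Proof. by case: u => n [s t] /=; do 2 f_equal; apply: val_inj; rewrite /= map_comp. Qed.

Lemma HSig_map_const (A B : Type) (f : A -> B) (p' : Sig 0) :
  HSig_map f (HSig_const A p') = HSig_const B p'.
Proof. by rewrite /HSig_const /= [map_tuple _ _]tuple0. Qed.

Lemma cut_approx (p' : Sig 0) (muH : Type) (phi' : HSig Sig muH -> muH)
    (nuH : Type) (tau' : nuH -> HSig Sig nuH) n s :
  cut p' phi' tau' n s
  = approx_hom (@HSig_map Sig) phi' (HSig_const Empty_set p') tau' n s.
Proof.
elim: n s => [|n IH] s; first by move: (HSig_map_const (@empty_map muH) p') => /= ->.
by rewrite /= (functional_extensionality _ _ IH).
Qed.

End Signature.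

Section SetFunctor.

Variables (F : Type -> Type) (fmap : forall A B : Type, (A -> B) -> F A -> F B).
Hypothesis fmap_id : forall (A : Type) (x : F A), fmap (fun a => a) x = x.
Hypothesis fmap_comp : forall (A B C : Type) (f : A -> B) (g : B -> C) (x : F A),
  fmap (fun a => g (f a)) x = fmap g (fmap f x).

Lemma fmap_ext (A B : Type) (f g : A -> B) :
  (forall a, f a = g a) -> forall x, fmap f x = fmap g x.
Proof. by move=> fg x; rewrite (functional_extensionality f g fg). Qed.

Lemma initial_endo_id (M : Type) (phi : F M -> M) : is_initial_alg fmap phi ->
  forall e : M -> M, (forall t, e (phi t) = phi (fmap e t)) -> forall x, e x = x.
Proof.
move=> init e e_hom x; have [h [_ h_uniq]] := init _ phi.
have id_h : forall y, y = h y by apply: (h_uniq (fun y => y)) => t; rewrite fmap_id.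
by rewrite (h_uniq e e_hom) -id_h.
Qed.

(* Lambek's lemma, injectivity half: the structure map of an initial algebra is
   injective, with left inverse the algebra morphism M -> F M. *)
Lemma initial_alg_inj (M : Type) (phi : F M -> M) :
  is_initial_alg fmap phi -> injective phi.
Proof.
move=> init; have [j [j_hom _]] := init _ (fmap phi).
have phij : forall x, phi (j x) = x.
  by apply: (initial_endo_id init (e := fun x => phi (j x))) => t; rewrite j_hom -fmap_comp.
have jphi t : j (phi t) = t by rewrite j_hom -fmap_comp (fmap_ext phij) fmap_id.
by move=> u v E; rewrite -(jphi u) -(jphi v) E.
Qed.

Lemma terminal_endo_id (N : Type) (tau : N -> F N) : is_terminal_coalg fmap tau ->
  forall e : N -> N, (forall x, tau (e x) = fmap e (tau x)) -> forall x, e x = x.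
Proof.
move=> term e e_hom x; have [h [_ h_uniq]] := term _ tau.
have id_h : forall y, y = h y by apply: (h_uniq (fun y => y)) => y; rewrite fmap_id.
by rewrite (h_uniq e e_hom) -id_h.
Qed.

(* Terminal coalgebras are simple: a map whose kernel is a congruence (compatible
   with the structure map) is injective, since it induces a quotient coalgebra. *)
Lemma terminal_congruence_inj (N : Type) (tau : N -> F N) (Q : Type) (q : N -> Q) :
  is_terminal_coalg fmap tau ->
  (forall x y, q x = q y -> fmap q (tau x) = fmap q (tau y)) -> injective q.
Proof.
move=> term compat a b qab.
pose gamma z := fmap q (tau (epsilon (inhabits a) (fun x => q x = z))).
have q_hom x : gamma (q x) = fmap q (tau x).
  exact/compat/(epsilon_spec (inhabits a) (fun y => q y = q x) (ex_intro _ x erefl)).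
have [u [u_hom _]] := term _ gamma.
have uq : forall x, u (q x) = x.
  by apply: (terminal_endo_id term (e := fun x => u (q x))) => x; rewrite u_hom q_hom -fmap_comp.
by rewrite -(uq a) qab uq.
Qed.

Hypothesis Ffin : finitary fmap.

Lemma finitary_joint (A : Type) (x y : F A) :
  exists (I : finType) (e : I -> A) (x' y' : F I), x = fmap e x' /\ y = fmap e y'.
Proof.
have [n1 [i1 [x1 <-]]] := Ffin x; have [n2 [i2 [y1 <-]]] := Ffin y.
pose e (k : 'I_n1 + 'I_n2) := match k with inl k1 => i1 k1 | inr k2 => i2 k2 end.
exists ('I_n1 + 'I_n2)%type, e, (fmap inl x1), (fmap inr y1).
by split; rewrite -fmap_comp.
Qed.

(* On a finite support the chain is stationary, so g factors
   through a single f_n0. *)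
Lemma fmap_kernel_limit (A T Q : Type) (q0 : Q) (f : nat -> A -> T) (g : A -> Q) :
  (forall n N a b, n <= N -> f N a = f N b -> f n a = f n b) ->
  (forall a b, (forall n, f n a = f n b) -> g a = g b) ->
  forall x y, (forall n, fmap (f n) x = fmap (f n) y) -> fmap g x = fmap g y.
Proof.
move=> mono kerg x y.
have [I [e [x' [y' [-> ->]]]]] := finitary_joint x y => fxy.
have [n0 stable] := finite_kernels_stabilize (f := fun n i => f n (e i))
  (fun n N i j nN => mono n N (e i) (e j) nN).
have [w wE] := factor_through_kernel q0 (f := fun i => f n0 (e i)) (g := fun i => g (e i))
  (fun i j E => kerg _ _ (stable i j E)).
rewrite -!fmap_comp -!(fmap_ext wE) !(fmap_comp (fun i => f n0 (e i)) w).
by rewrite !(fmap_comp e (f n0)) fxy.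
Qed.

Section Approximations.

Variables (M : Type) (phi : F M -> M) (p : F Empty_set).
Local Notation approx := (approx_hom fmap phi p).

Lemma approx_hom_comp (X Y : Type) (alpha : X -> F X) (beta : Y -> F Y) (f : X -> Y) :
  (forall x, beta (f x) = fmap f (alpha x)) ->
  forall n x, approx alpha n x = approx beta n (f x).
Proof.
move=> f_hom; elim=> [|n IH] x //=.
by rewrite f_hom -fmap_comp (fmap_ext IH).
Qed.

Hypothesis phi_inj : injective phi.

Lemma approx_kernel_step (X : Type) (alpha : X -> F X) n x y :
  approx alpha n.+1 x = approx alpha n.+1 y -> approx alpha n x = approx alpha n y.
Proof.
elim: n x y => [|n IH] x y; first by move=> _.
move=> /phi_inj E /=; have [w wE] := factor_through_kernel (approx alpha 0 x) IH.
by rewrite -!(fmap_ext wE) !(fmap_comp (approx alpha n.+1) w) E.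
Qed.

Lemma approx_kernel_mono (X : Type) (alpha : X -> F X) n n' x y : n <= n' ->
  approx alpha n' x = approx alpha n' y -> approx alpha n x = approx alpha n y.
Proof.
move=> nn'; rewrite -(subnKC nn'); elim: (n' - n) => [|k IH]; first by rewrite addn0.
rewrite addnS => E; apply: IH; exact: approx_kernel_step E.
Qed.

Variables (N : Type) (tau : N -> F N).

Lemma approx_separate : is_terminal_coalg fmap tau ->
  forall x y, (forall n, approx tau n x = approx tau n y) -> x = y.
Proof.
move=> term x y same.
pose q (z : N) := fun n => approx tau n z.
apply: (terminal_congruence_inj term (q := q)); last exact: functional_extensionality.
move=> a b qab; apply: (fmap_kernel_limit (q a) (@approx_kernel_mono _ tau)).
  by move=> a' b'; apply: functional_extensionality.
by move=> n; apply: phi_inj; apply: (congr1 (fun r => r n.+1) qab).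
Qed.

Variables (m : M -> N).
Hypothesis m_hom : forall u, tau (m (phi u)) = fmap m u.

Lemma approx_trunc j k y : approx tau j (m (approx tau k y)) = approx tau (minn j k) y.
Proof.
elim: j k y => [|j IH] k y; first by rewrite min0n.
case: k => [|k].
  by rewrite minn0 /= m_hom -!fmap_comp; congr phi; apply: fmap_ext; case.
by rewrite minnSS /= m_hom -!fmap_comp (fmap_ext (IH k)).
Qed.

End Approximations.

End SetFunctor.

Section Presentation.

Variables (F : Type -> Type) (fmap : forall A B : Type, (A -> B) -> F A -> F B).
Hypothesis fmap_id : forall (A : Type) (x : F A), fmap (fun a => a) x = x.
Hypothesis fmap_comp : forall (A B C : Type) (f : A -> B) (g : B -> C) (x : F A),
  fmap (fun a => g (f a)) x = fmap g (fmap f x).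

Variables (Sig : nat -> Type) (eps : forall Y : Type, HSig Sig Y -> F Y) (p' : Sig 0).
Hypothesis eps_nat : is_natural fmap eps.
Variables (muF : Type) (phi : F muF -> muF) (nuF : Type) (tau : nuF -> F nuF).
Variables (muH : Type) (phi' : HSig Sig muH -> muH).
Variables (nuH : Type) (tau' : nuH -> HSig Sig nuH).
Variables (hsharp : muH -> muF) (khat : nuH -> nuF).
Hypothesis hsharp_hom : forall u, hsharp (phi' u) = phi (eps (HSig_map hsharp u)).
Hypothesis khat_hom : forall s, tau (khat s) = fmap khat (eps (tau' s)).

Local Notation p := (@eps Empty_set (HSig_const Empty_set p')).
Local Notation d := (approx_hom fmap phi p tau).
Local Notation cutn := (cut p' phi' tau').

Lemma approx_khat n s : d n (khat s) = hsharp (cutn n s).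
Proof.
elim: n s => [|n IH] s /=.
  by rewrite hsharp_hom HSig_map_const -eps_nat HSig_map_const.
by rewrite khat_hom -fmap_comp (fmap_ext fmap IH) -eps_nat hsharp_hom HSig_map_comp.
Qed.

(* khat is surjective: a coalgebra morphism back through a chosen section of eps
   composes with khat to an endomorphism of the terminal coalgebra. *)
Lemma khat_surj :
  (forall (Y : Type) (y : F Y), exists u, @eps Y u = y) ->
  is_terminal_coalg fmap tau -> is_terminal_coalg (@HSig_map Sig) tau' ->
  forall a, exists s, khat s = a.
Proof.
move=> eps_surj nuF_term nuH_term a.
have [beta betaE] := choice (fun b u => @eps nuF u = tau b) (fun b => eps_surj _ (tau b)).
have [g [g_hom _]] := nuH_term _ beta.
have khat_g : forall b, khat (g b) = b.
  apply: (terminal_endo_id fmap_id nuF_term (e := fun b => khat (g b))) => b.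
  by rewrite khat_hom g_hom eps_nat -fmap_comp betaE.
by exists (g a).
Qed.

Variables (m : muF -> nuF) (m' : muH -> nuH).
Hypothesis m_hom : forall u, tau (m (phi u)) = fmap m u.
Hypothesis m'_hom : forall u, tau' (m' (phi' u)) = HSig_map m' u.

Lemma cut_le_iff :
  (forall a, exists s, khat s = a) ->
  (forall a b, (forall n, d n a = d n b) -> a = b) ->
  forall a b, cut_le p' phi' tau' hsharp m' khat a b
              <-> below_trunc (fun k y => m (d k y)) a b.
Proof.
move=> khat_onto d_sep a b.
have cut_trunc j k s : cutn j (m' (cutn k s)) = cutn (minn j k) s.
  by rewrite !cut_approx (approx_trunc (@HSig_map_comp Sig) _ m'_hom).
rewrite /cut_le /sim_star /below_trunc; split.
  case=> [->|[s [s' [k [-> -> same]]]]]; [by left | right; exists k].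
  apply: d_sep => j.
  by rewrite (approx_trunc fmap_comp _ m_hom) approx_khat same cut_trunc -approx_khat.
case=> [->|[k ->]]; first by left.
right; have [s <-] := khat_onto b; have [s0 s0E] := khat_onto (m (d k (khat s))).
exists s0, s, k; split=> [|//|j]; first by rewrite s0E.
by rewrite cut_trunc -!approx_khat s0E (approx_trunc fmap_comp _ m_hom).
Qed.

End Presentation.

Theorem corollary6p5
  (F : Type -> Type) (fmap : forall A B : Type, (A -> B) -> F A -> F B)
  (Ffun : @is_functor F fmap) (Ffin : @finitary F fmap)
  (Fne : inhabited (F Empty_set))
  (Sig : nat -> Type) (eps : forall Y : Type, HSig Sig Y -> F Y)
  (eps_nat : @is_natural Sig F fmap eps)
  (eps_surj : forall (Y : Type) (y : F Y), exists u, eps Y u = y)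
  (p' : Sig 0)
  (muF : Type) (phi : F muF -> muF) (muF_init : @is_initial_alg F fmap muF phi)
  (nuF : Type) (tau : nuF -> F nuF) (nuF_term : @is_terminal_coalg F fmap nuF tau)
  (muH : Type) (phi' : HSig Sig muH -> muH)
  (muH_init : @is_initial_alg (HSig Sig) (@HSig_map Sig) muH phi')
  (nuH : Type) (tau' : nuH -> HSig Sig nuH)
  (nuH_term : @is_terminal_coalg (HSig Sig) (@HSig_map Sig) nuH tau')
  (m : muF -> nuF) (m_hom : forall u, tau (m (phi u)) = fmap _ _ m u)
  (m' : muH -> nuH) (m'_hom : forall u, tau' (m' (phi' u)) = HSig_map m' u)
  (hsharp : muH -> muF)
  (hsharp_hom : forall u, hsharp (phi' u) = phi (eps muF (HSig_map hsharp u)))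
  (khat : nuH -> nuF)
  (khat_hom : forall s, tau (khat s) = fmap _ _ khat (eps nuH (tau' s)))
  (X : Type) (alpha : X -> F X)
  (h : X -> nuF) (h_hom : forall x, tau (h x) = fmap _ _ h (alpha x)) :
  let p := eps Empty_set (HSig_const Empty_set p') in
  let le := cut_le p' phi' tau' hsharp m' khat in
  let hn := fun n x => m (approx_hom fmap phi p alpha n x) in
  (forall n x, le (hn n x) (hn n.+1 x)) /\ is_pointwise_join le hn h.
Proof.
move=> p le hn; case: Ffun => fmap_id fmap_comp.
pose d := approx_hom fmap phi p tau.
pose trunc k y := m (d k y).
have phi_inj := initial_alg_inj fmap_id fmap_comp muF_init.
have d_sep := approx_separate fmap_id fmap_comp Ffin (p := p) phi_inj nuF_term.
have trunc_trunc j k y : trunc j (trunc k y) = trunc (minn j k) y.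
  by rewrite /trunc /d (approx_trunc fmap_comp _ m_hom).
have trunc_sep a b : (forall n, trunc n a = trunc n b) -> a = b.
  move=> same; apply: d_sep => n; have := same n; rewrite /trunc => same_n.
  by rewrite -(minnn n) -!(approx_trunc fmap_comp _ m_hom) same_n.
have leE a b : le a b <-> below_trunc trunc a b.
  exact: (cut_le_iff fmap_comp eps_nat hsharp_hom khat_hom m_hom m'_hom
           (khat_surj fmap_id fmap_comp eps_nat khat_hom eps_surj nuF_term nuH_term) d_sep).
have hnE n x : hn n x = trunc n (h x) by rewrite /hn (approx_hom_comp fmap_comp _ _ h_hom).
split=> [n x|]; first by apply/leE; rewrite !hnE; apply: trunc_chain.
split=> [n x|g bound x]; first by apply/leE; rewrite hnE; apply: trunc_below.
apply/leE; apply: trunc_least => // n; apply/leE; rewrite -hnE; exact: bound.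
Qed.
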